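(* Let $\beta,\beta'$ be pseudo-Anosov 3-braids and suppose that for some $l,m\ge1$ the triple-weight train tracks $\mathcal T_l$ (for $\beta$) and $\mathcal T'_m$ (for $\beta'$) have the same 4-ratio. Then for all $t\ge1$, $\mathcal T_{l+t}$ and $\mathcal T'_{m+t}$ have the same 4-ratio, and their 4-tuples have the same type (both Type 1 or both Type 2).
   Context: Identify $B_3$ with the mapping class group of the 3-punctured disk $D_3$. A measured train track on $D_3$ is a smooth graph with trivalent switches where the three edges are tangent, each edge having a positive weight, satisfying at each switch: weight on one side = sum of the two weights on the other side; weights up to scaling. Maximal splitting $\tau\rightharpoonup\tau'$ splits simultaneously along all edges of largest weight (an edge of weight $a+b=c+d$ with neighbouring weights $a,b$ at one end and $c,d$ at the other is replaced by an edge of weight $|c-a|$). The paper fixes measured train tracks $\mathrm M(a,b),\mathrm W(a,b)$ ($a,b>0$) on $D_3$ with six edges and four switches ($\mathrm W(a,b)$ the $180^\circ$ rotation of $\mathrm M(a,b)$). For a pseudo-Anosov 3-braid $\beta$ there is a unique irrational $\alpha\in(0,1)$ (the MP-ratio) such that exactly one of $\mathrm M(1,\alpha),\mathrm M(\alpha,1),\mathrm W(\alpha,1),\mathrm W(1,\alpha)$ is invariant under $\beta$; call it $\tau_0$, let $n=\lfloor1/\alpha\rfloor$ and $\tau_0\rightharpoonup\tau_1\rightharpoonup\cdots$ the maximal splitting sequence. From $\tau_{n+4}$ on all train tracks have exactly three distinct edge weights; set $\mathcal T_k:=\tau_{n+3+k}$ ($k\ge1$). Writing the smallest weight of $\mathcal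 T_k$ as $\tfrac12(x_k+y_k\alpha)$ and the second smallest as $\tfrac12(z_k+w_k\alpha)$ with $x_k,y_k,z_k,w_k\in\mathbb Z$, $(x_k,y_k;z_k,w_k)$ is the 4-tuple and $\frac{x_k+y_k\alpha}{z_k+w_k\alpha}$ the 4-ratio of $\mathcal T_k$. Put $(x_0,y_0;z_0,w_0)=(1,-n;0,1)$. For each $k\ge0$ the 4-tuple of $\mathcal T_{k+1}$ equals either $(z_k-x_k,w_k-y_k;x_k,y_k)$, in which case it is said to be of Type 1, or $(x_k,y_k;z_k-x_k,w_k-y_k)$, in which case it is of Type 2. The same data for $\beta'$ are primed. *)

From HB Require Import structures.
From mathcomp Require Import all_boot all_order all_algebra.
From mathcomp Require Import reals.
Set Implicit Arguments. Unset Strict Implicit. Unset Printing Implicit Defensive.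
Import Order.TTheory GRing.Theory Num.Theory.
Local Open Scope ring_scope.

Definition tuple4 := (int * int * int * int)%type.

Definition t_x (q : tuple4) : int := q.1.1.1.
Definition t_y (q : tuple4) : int := q.1.1.2.
Definition t_z (q : tuple4) : int := q.1.2.
Definition t_w (q : tuple4) : int := q.2.

Definition type1_step (q : tuple4) : tuple4 :=
  (t_z q - t_x q, t_w q - t_y q, t_x q, t_y q).
Definition type2_step (q : tuple4) : tuple4 :=
  (t_x q, t_y q, t_z q - t_x q, t_w q - t_y q).

Definition irrational (R : realType) (a : R) : Prop :=
  forall p q : int, q != 0 -> a * q%:~R != p%:~R.

(* The data attached to a pseudo-Anosov 3-braid beta via its maximal
   splitting sequence tau_0 ~> tau_1 ~> ...:
   - mp_ratio  : the MP-ratio alpha (irrational, in (0,1)),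
   - nfl       : n = floor (1/alpha),
   - tt_wts k  : for k >= 1, the three distinct edge weights of the
                 triple-weight train track  T_k = tau_{n+3+k}, listed in
                 strictly increasing order (smallest, second smallest, largest),
   - tup k     : the 4-tuple of T_k (k >= 1), with tup 0 = (1,-n;0,1),
                 i.e. smallest weight = (x_k + y_k alpha)/2 and second smallest
                 weight = (z_k + w_k alpha)/2,
   - each 4-tuple of T_{k+1} arises from the previous one by the Type 1 or
     the Type 2 rule. *)
Record braid_split_data (R : realType) := BraidSplitData {
  mp_ratio : R;
  mp_ratio_irr : irrational mp_ratio;
  mp_ratio_gt0 : 0 < mp_ratio;
  mp_ratio_lt1 : mp_ratio < 1;
  nfl : nat;
  nfl_floor : (nfl%:R <= mp_ratio^-1) /\ (mp_ratio^-1 < nfl.+1%:R);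
  tt_wts : nat -> R * R * R;
  tt_wts_sorted : forall k, (1 <= k)%N ->
     0 < (tt_wts k).1.1 /\ (tt_wts k).1.1 < (tt_wts k).1.2 /\
     (tt_wts k).1.2 < (tt_wts k).2;
  tup : nat -> tuple4;
  tup0 : tup 0%N = (1%:Z, - (nfl%:Z), 0%:Z, 1%:Z);
  tup_smallest : forall k, (1 <= k)%N ->
     (tt_wts k).1.1 = ((t_x (tup k))%:~R + (t_y (tup k))%:~R * mp_ratio) / 2;
  tup_second : forall k, (1 <= k)%N ->
     (tt_wts k).1.2 = ((t_z (tup k))%:~R + (t_w (tup k))%:~R * mp_ratio) / 2;
  tup_step : forall k,
     tup k.+1 = type1_step (tup k) \/ tup k.+1 = type2_step (tup k)
}.

Definition four_ratio (R : realType) (D : braid_split_data R) (k : nat) : R :=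
  let q := tup D k in
  ((t_x q)%:~R + (t_y q)%:~R * mp_ratio D) /
  ((t_z q)%:~R + (t_w q)%:~R * mp_ratio D).

Definition is_type1 (R : realType) (D : braid_split_data R) (k : nat) : Prop :=
  tup D k = type1_step (tup D k.-1).
Definition is_type2 (R : realType) (D : braid_split_data R) (k : nat) : Prop :=
  tup D k = type2_step (tup D k.-1).

(* The 4-ratio r of a triple-weight train track is (smallest weight)/(second
   smallest weight), so 0 < r < 1. A Type 1 step sends r to 1/r - 1 and a
   Type 2 step sends it to r/(1 - r); as the new ratio is again below 1, a
   Type 1 step can only follow a ratio r > 1/2 and a Type 2 step only a ratio
   r < 1/2. Hence the type of the next 4-tuple and the next 4-ratio are both
   functions of r alone, and equal 4-ratios stay equal forever. *)
From HB Require Import structures.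
From mathcomp Require Import all_boot all_order all_algebra.
From mathcomp Require Import reals.
From mathcomp Require Import ring lra.
Set Implicit Arguments. Unset Strict Implicit. Unset Printing Implicit Defensive.
Import Order.TTheory GRing.Theory Num.Theory.
Local Open Scope ring_scope.

Section TupleRatio.
Variable (F : fieldType) (a : F).
Implicit Type q : tuple4.

Definition tuple_num q : F := (t_x q)%:~R + (t_y q)%:~R * a.
Definition tuple_den q : F := (t_z q)%:~R + (t_w q)%:~R * a.
Definition tuple_ratio q : F := tuple_num q / tuple_den q.

Lemma tuple_num_type1_step q : tuple_num (type1_step q) = tuple_den q - tuple_num q.
Proof. by rewrite /tuple_num /tuple_den /= !intrB; ring. Qed.

Lemma tuple_den_type1_step q : tuple_den (type1_step q) = tuple_num q.
Proof. by []. Qed.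

Lemma tuple_num_type2_step q : tuple_num (type2_step q) = tuple_num q.
Proof. by []. Qed.

Lemma tuple_den_type2_step q : tuple_den (type2_step q) = tuple_den q - tuple_num q.
Proof. by rewrite /tuple_num /tuple_den /= !intrB; ring. Qed.

Lemma tuple_ratio_type1_step q : tuple_num q != 0 ->
  tuple_ratio (type1_step q) = (tuple_ratio q)^-1 - 1.
Proof.
move=> num_neq0; rewrite /tuple_ratio tuple_num_type1_step tuple_den_type1_step.
by rewrite invf_div; field.
Qed.

Lemma tuple_ratio_type2_step q : tuple_den q != 0 -> tuple_den q != tuple_num q ->
  tuple_ratio (type2_step q) = tuple_ratio q / (1 - tuple_ratio q).
Proof.
move=> den_neq0 den_neq_num.
rewrite /tuple_ratio tuple_num_type2_step tuple_den_type2_step; field.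
by rewrite den_neq0 subr_eq0.
Qed.

End TupleRatio.

Section FourRatio.
Variable (R : realType).
Implicit Type D : braid_split_data R.

Lemma four_ratioE D k : four_ratio D k = tuple_ratio (mp_ratio D) (tup D k).
Proof. by []. Qed.

Lemma tuple_num_tup_bounds D k : (1 <= k)%N ->
  0 < tuple_num (mp_ratio D) (tup D k) < tuple_den (mp_ratio D) (tup D k).
Proof.
move=> k_gt0; have [small_gt0 [small_lt_second _]] := tt_wts_sorted D k_gt0.
rewrite (tup_smallest D k_gt0) (tup_second D k_gt0) in small_gt0 small_lt_second.
by rewrite /tuple_num /tuple_den; apply/andP; split; lra.
Qed.

Lemma four_ratio_lt1 D k : (1 <= k)%N -> four_ratio D k < 1.
Proof.
move=> /(tuple_num_tup_bounds D) /andP[num_gt0 num_lt_den].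
by rewrite four_ratioE /tuple_ratio ltr_pdivrMr ?mul1r //; apply: lt_trans num_lt_den.
Qed.

Variant four_ratio_succ_spec D k (r : R) : Prop :=
  | FourRatioType1 of 2^-1 < r & is_type1 D k.+1 & four_ratio D k.+1 = r^-1 - 1
  | FourRatioType2 of r < 2^-1 & is_type2 D k.+1 & four_ratio D k.+1 = r / (1 - r).

Lemma four_ratio_succP D k : (1 <= k)%N -> four_ratio_succ_spec D k (four_ratio D k).
Proof.
move=> k_gt0; have /andP[num_gt0 num_lt_den] := tuple_num_tup_bounds D k_gt0.
have den_gt0 := lt_trans num_gt0 num_lt_den.
have r_gt0 : 0 < four_ratio D k by rewrite four_ratioE divr_gt0.
have r_lt1 := four_ratio_lt1 D k_gt0.
have succ_lt1 := four_ratio_lt1 D (ltn0Sn k).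
case: (tup_step D k) => step.
- have succE : four_ratio D k.+1 = (four_ratio D k)^-1 - 1.
    by rewrite !four_ratioE step tuple_ratio_type1_step ?gt_eqF.
  apply: FourRatioType1 => //.
  by rewrite succE ltrBlDr -[1 + 1]/2 invf_plt ?posrE in succ_lt1.
- have succE : four_ratio D k.+1 = four_ratio D k / (1 - four_ratio D k).
    by rewrite !four_ratioE step tuple_ratio_type2_step ?gt_eqF.
  apply: FourRatioType2 => //; rewrite succE ltr_pdivrMr ?subr_gt0 // mul1r in succ_lt1.
  lra.
Qed.

Lemma four_ratio_succ_eq D D' k k' : (1 <= k)%N -> (1 <= k')%N ->
  four_ratio D k = four_ratio D' k' ->
  four_ratio D k.+1 = four_ratio D' k'.+1 /\
  ((is_type1 D k.+1 /\ is_type1 D' k'.+1) \/ (is_type2 D k.+1 /\ is_type2 D' k'.+1)).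
Proof.
move=> k_gt0 k'_gt0 eq_r.
have := four_ratio_succP D' k'_gt0; rewrite -eq_r.
case: (four_ratio_succP D k_gt0) => [r_gt t1 -> | r_lt t2 ->] [r_gt' t1' -> | r_lt' t2' ->].
- by split; [|left].
- lra.
- lra.
- by split; [|right].
Qed.

End FourRatio.

Theorem lemma7p3 (R : realType) (D D' : braid_split_data R) (l m : nat) :
  (1 <= l)%N -> (1 <= m)%N ->
  four_ratio D l = four_ratio D' m ->
  forall t : nat, (1 <= t)%N ->
    four_ratio D (l + t) = four_ratio D' (m + t) /\
    ((is_type1 D (l + t) /\ is_type1 D' (m + t)) \/
     (is_type2 D (l + t) /\ is_type2 D' (m + t))).
Proof.
move=> l_gt0 m_gt0 eq_lm.
have succ_eq t := @four_ratio_succ_eq R D D' (l + t) (m + t)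
  (leq_trans l_gt0 (leq_addr t l)) (leq_trans m_gt0 (leq_addr t m)).
have eq_ratio t : four_ratio D (l + t) = four_ratio D' (m + t).
  by elim: t => [|t /succ_eq[]]; rewrite ?addn0 ?addnS.
by case=> // t _; rewrite !addnS; apply/succ_eq/eq_ratio.
Qed.
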